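(* Let $S\subseteq[n]$ and $k\in S$. Fix deterministic vectors $\delta_j\in\mathbb{R}^n$ for $j\in S\setminus\{k\}$ and $\delta_j=0$ for $j\notin S$. Suppose agent $k$ regards $M$ as random with distribution $\mathcal{D}_k$ having finite first and second moments, and evaluates a report $\delta_k\in\mathbb{R}^n$ by $\mathbb{E}_{M\sim\mathcal{D}_k}\big[-\langle\delta_k,w_k'\rangle+\gamma_k\langle w_k',\Sigma w_k'\rangle\big]$, where $w_k'=W'e_k$ and $(W',P')$ is the stable point for $M+\Delta$ with $\Delta e_i=\delta_i$ for all $i$. Let $V_k\in\mathbb{R}^{n\times n}$ be defined by $\mathrm{vec}(V_k)=\tfrac12K^{-1}\mathrm{vec}\big(\mathbb{E}_{\mathcal{D}_k}[M]+\mathbb{E}_{\mathcal{D}_k}[M]^T\big)$ and $v_k=V_ke_k$. Then $\delta_k$ maximizes this expected utility if and only if $$T^{(k,k)}\delta_k+\sum_{j\in S,\ j\neq k}T^{(k,j)}\delta_j=\big(2\gamma_k(L^{(k,k)})^T\Sigma-I\big)v_k .$$ Consequently, a matrix $\Delta$ with $\Delta e_j=0$ for $j\notin S$ is a Nash equilibrium (each $k\in S$ maximizing its expected utility above given the others' columns) if and only if these equations hold simultaneously for all $k\in S$; if the joint system has no solution, there is no Nash equilibrium.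
   Context: Fix agents $[n]=\{1,\dots,n\}$. Let $\Sigma\in\mathbb{R}^{n\times n}$ be symmetric positive definite and $\Gamma=\mathrm{diag}(\gamma_1,\dots,\gamma_n)$ with all $\gamma_i>0$. For a matrix of reported negotiating positions $M'\in\mathbb{R}^{n\times n}$, the stable point for $M'$ is the unique pair $(W,P)$ of real $n\times n$ matrices with $W=W^T$, $P^T=-P$ and $M'-P=2\Sigma W\Gamma$; equivalently $\mathrm{vec}(W)=\tfrac12(\Gamma\otimes\Sigma+\Sigma\otimes\Gamma)^{-1}\mathrm{vec}(M'+M'^T)$. Here $\mathrm{vec}$ stacks columns and $e_i$ is the $i$-th standard basis vector. Matrices: $\Pi\in\mathbb{R}^{n^2\times n^2}$ is the commutation matrix, $\Pi\,\mathrm{vec}(X)=\mathrm{vec}(X^T)$. For $Z\in\mathbb{R}^{n^2\times n^2}$, $Z^{(p,q)}$ is its $n\times n$ block in block-row $p$ and block-column $q$. Set $K=\Gamma\otimes\Sigma+\Sigma\otimes\Gamma$, $L=\tfrac12(K^{-1}+K^{-1}\Pi)$, $T^{(k,k)}=L^{(k,k)}+(L^{(k,k)})^T-2\gamma_k(L^{(k,k)})^T\Sigma L^{(k,k)}$, and $T^{(k,j)}=(I-2\gamma_k(L^{(k,k)})^T\Sigma)L^{(k,j)}$ for $j\neq k$. *)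

From HB Require Import structures.
From mathcomp Require Import all_boot all_order all_algebra.
From mathcomp Require Import all_classical all_reals all_analysis.
Set Implicit Arguments. Unset Strict Implicit. Unset Printing Implicit Defensive.
Import Order.TTheory GRing.Theory Num.Theory.
Local Open Scope ring_scope.

Section Defs.
Variables (R : realType) (n : nat).

(* column-stacking index: entry (i,j) of X sits at position j*n+i of vec X *)
Definition cidx (i j : 'I_n) : 'I_(n * n) := mxvec_index j i.

Definition vec (X : 'M[R]_n) : 'cV[R]_(n * n) :=
  \sum_(i < n) \sum_(j < n) X i j *: delta_mx (cidx i j) 0.
Definition unvec (v : 'cV[R]_(n * n)) : 'M[R]_n :=
  \matrix_(i, j) v (cidx i j) 0.

(* Kronecker product: block (p,q) of A (x) B is A p q * B *)
Definition kron (A B : 'M[R]_n) : 'M[R]_(n * n) :=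
  \sum_(p < n) \sum_(q < n) \sum_(i < n) \sum_(j < n)
     (A p q * B i j) *: delta_mx (cidx i p) (cidx j q).

(* commutation matrix: Pi vec(X) = vec(X^T) *)
Definition commmx : 'M[R]_(n * n) :=
  \sum_(i < n) \sum_(j < n) delta_mx (cidx i j) (cidx j i).

Definition blk (Z : 'M[R]_(n * n)) (p q : 'I_n) : 'M[R]_n :=
  \matrix_(i, j) Z (cidx i p) (cidx j q).

Variables (Sigma : 'M[R]_n) (gam : 'I_n -> R).
Definition Gam : 'M[R]_n := diag_mx (\row_i gam i).

Definition Kmx : 'M[R]_(n * n) := kron Gam Sigma + kron Sigma Gam.
Definition Lmx : 'M[R]_(n * n) :=
  2^-1 *: (invmx Kmx + invmx Kmx *m commmx).

Definition Tmx (k j : 'I_n) : 'M[R]_n :=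
  if j == k then
    blk Lmx k k + (blk Lmx k k)^T - (2 * gam k) *: ((blk Lmx k k)^T *m Sigma *m blk Lmx k k)
  else (1%:M - (2 * gam k) *: ((blk Lmx k k)^T *m Sigma)) *m blk Lmx k j.

Definition stableW (M' : 'M[R]_n) : 'M[R]_n :=
  unvec (2^-1 *: (invmx Kmx *m vec (M' + M'^T))).

Definition is_stable_point (M' W P : 'M[R]_n) : Prop :=
  W^T = W /\ P^T = - P /\ M' - P = 2%:R *: (Sigma *m W *m Gam).

Definition evec (k : 'I_n) : 'cV[R]_n := delta_mx k 0.
Definition ip (x y : 'cV[R]_n) : R := (x^T *m y) 0 0.

Definition colsmx (delta : 'I_n -> 'cV[R]_n) : 'M[R]_n :=
  \matrix_(i, j) delta j i 0.

Definition utility (k : 'I_n) (delta : 'I_n -> 'cV[R]_n) (M : 'M[R]_n) : R :=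
  let w := stableW (M + colsmx delta) *m evec k in
  - ip (delta k) w + gam k * ip w (Sigma *m w).

Definition replace_col (delta : 'I_n -> 'cV[R]_n) (k : 'I_n) (d : 'cV[R]_n) :=
  fun j => if j == k then d else delta j.

Section Prob.
Context (d : measure_display) (Omega : measurableType d)
        (Pk : 'I_n -> probability Omega R) (Mr : Omega -> 'M[R]_n).

Definition exp_utility (k : 'I_n) (delta : 'I_n -> 'cV[R]_n) : R :=
  Rintegral (Pk k) setT (fun w => utility k delta (Mr w)).

Definition best_response (k : 'I_n) (delta : 'I_n -> 'cV[R]_n) : Prop :=
  forall dk : 'cV[R]_n,
    exp_utility k (replace_col delta k dk) <= exp_utility k delta.

Definition nash (S : {set 'I_n}) (delta : 'I_n -> 'cV[R]_n) : Prop :=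
  forall k, k \in S -> best_response k delta.

Definition EM (k : 'I_n) : 'M[R]_n :=
  \matrix_(i, j) Rintegral (Pk k) setT (fun w => Mr w i j).

Definition vk (k : 'I_n) : 'cV[R]_n := stableW (EM k) *m evec k.

Definition br_eq (S : {set 'I_n}) (k : 'I_n) (delta : 'I_n -> 'cV[R]_n) : Prop :=
  Tmx k k *m delta k + \sum_(j in S | j != k) Tmx k j *m delta j
  = ((2 * gam k) *: ((blk Lmx k k)^T *m Sigma) - 1%:M) *m vk k.

End Prob.
End Defs.

From Pilot Require Import Defs.
From HB Require Import structures.
From mathcomp Require Import all_boot all_order all_algebra.
From mathcomp Require Import all_classical all_reals all_analysis.
From mathcomp Require Import ring lra.
Set Implicit Arguments. Unset Strict Implicit. Unset Printing Implicit Defensive.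
Import Order.TTheory GRing.Theory Num.Theory.
Local Open Scope ring_scope.

(* The stable point is linear in the reports, [vec W = L vec M'], and agent k's
   own report enters its column of [W] through the block [B = L^(k,k)]. Hence,
   as a function of a deviation [h] of agent k, the utility at a realized [M] is
   [u(M) + q(h) - <h, g(M)>] with [q(h) = -<h, B h> + gam_k <B h, Sigma B h>]
   independent of [M] and [g] affine in [M]. Taking expectations replaces [g(M)]
   by [g(E M)], and [g(E M) = 0] is the stated equation. Moreover [q <= 0]: if
   [X] is the (symmetric) stable [W] for the report [D = h e_k^T], then
   [<h, B h> = tr (D^T X) = 2 tr (Gamma X Sigma X) >= 2 gam_k <B h, Sigma B h>].
   A nonpositive quadratic form minus a linear form is maximal at [0] iff the
   linear form vanishes. *)

Section VecKron.
Variables (R : realType) (n : nat).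

Lemma cidx_eq (i j a b : 'I_n) : (cidx i j == cidx a b) = (i == a) && (j == b).
Proof.
rewrite /cidx /mxvec_index; apply/eqP/andP => [|[/eqP-> /eqP->]//].
by move/cast_ord_inj/enum_rank_inj => [-> ->].
Qed.

Lemma sum_cidx (F : 'I_(n * n) -> R) :
  \sum_r F r = \sum_(j < n) \sum_(i < n) F (cidx i j).
Proof.
rewrite (reindex _ (curry_mxvec_bij _ _)) /= pair_big /=.
by apply: eq_bigr => -[j i] _.
Qed.

Lemma sum2_mul_eq (F : 'I_n -> 'I_n -> R) (a b : 'I_n) :
  \sum_(i < n) \sum_(j < n) F i j * ((i == a) && (j == b))%:R = F a b.
Proof.
rewrite (bigD1 a) //= [X in _ + X]big1 => [|i ia]; last first.
  by rewrite big1 // => j _; rewrite (negbTE ia) /= mulr0.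
rewrite addr0 (bigD1 b) //= !eqxx mulr1 big1 ?addr0 // => j jb.
by rewrite (negbTE jb) andbF mulr0.
Qed.

Lemma vecE (X : 'M[R]_n) a b : vec X (cidx a b) 0 = X a b.
Proof.
rewrite /vec summxE -[RHS](sum2_mul_eq X a b); apply: eq_bigr => i _.
rewrite summxE; apply: eq_bigr => j _; rewrite !mxE cidx_eq eqxx andbT.
by rewrite (eq_sym i) (eq_sym j).
Qed.

Lemma colP_cidx (u v : 'cV[R]_(n * n)) :
  (forall i j, u (cidx i j) 0 = v (cidx i j) 0) -> u = v.
Proof. by move=> uv; apply/colP => r; case/mxvec_indexP: r => j i; exact: uv. Qed.

Lemma vecK : cancel (@vec R n) (@unvec R n).
Proof. by move=> X; apply/matrixP => i j; rewrite mxE vecE. Qed.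

Lemma unvecK : cancel (@unvec R n) (@vec R n).
Proof. by move=> v; apply: colP_cidx => i j; rewrite vecE mxE. Qed.

Lemma vec_inj : injective (@vec R n).
Proof. exact: can_inj vecK. Qed.

Lemma vecD X Y : vec (X + Y) = vec X + vec Y :> 'cV[R]_(n * n).
Proof. by apply: colP_cidx => i j; rewrite mxE !vecE mxE. Qed.

Lemma vecZ a X : vec (a *: X) = a *: vec X :> 'cV[R]_(n * n).
Proof. by apply: colP_cidx => i j; rewrite mxE !vecE mxE. Qed.

Lemma vec0 : vec 0 = 0 :> 'cV[R]_(n * n).
Proof. by apply: colP_cidx => i j; rewrite vecE !mxE. Qed.

Lemma unvecD u v : unvec (u + v) = unvec u + unvec v :> 'M[R]_n.
Proof. by apply/matrixP => i j; rewrite !mxE. Qed.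

Lemma unvecZ a u : unvec (a *: u) = a *: unvec u :> 'M[R]_n.
Proof. by apply/matrixP => i j; rewrite !mxE. Qed.

Lemma mulmx_cidx (Z : 'M[R]_(n * n)) (v : 'cV[R]_(n * n)) r :
  (Z *m v) r 0 = \sum_(j < n) \sum_(i < n) Z r (cidx i j) * v (cidx i j) 0.
Proof. by rewrite mxE sum_cidx. Qed.

Lemma kronE (A B : 'M[R]_n) i p j q :
  kron A B (cidx i p) (cidx j q) = A p q * B i j.
Proof.
rewrite /kron summxE.
transitivity (\sum_(p' < n) \sum_(q' < n) (A p' q' *
   \sum_(i' < n) \sum_(j' < n) B i' j' * ((i' == i) && (j' == j))%:R)
   * ((p' == p) && (q' == q))%:R); last by rewrite !sum2_mul_eq.
apply: eq_bigr => p' _; rewrite summxE; apply: eq_bigr => q' _.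
rewrite summxE mulr_sumr mulr_suml; apply: eq_bigr => i' _.
rewrite summxE mulr_sumr mulr_suml; apply: eq_bigr => j' _.
rewrite !mxE !cidx_eq (eq_sym i) (eq_sym p) (eq_sym j) (eq_sym q).
by case: (i' == i); case: (p' == p); case: (j' == j); case: (q' == q);
  rewrite /= ?mulr1 ?mulr0 ?mul0r ?mulrA.
Qed.

Lemma mulmx_kron_vec (A B X : 'M[R]_n) : kron A B *m vec X = vec (B *m X *m A^T).
Proof.
apply: colP_cidx => i p; rewrite mulmx_cidx vecE !mxE.
apply: eq_bigr => q _; rewrite [in RHS]mxE mulr_suml.
by apply: eq_bigr => j _; rewrite kronE vecE !mxE [RHS]mulrC mulrA.
Qed.

Lemma commmxE (a b c d : 'I_n) :
  commmx R n (cidx a b) (cidx c d) = ((a == d) && (b == c))%:R.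
Proof.
rewrite /commmx summxE.
transitivity (\sum_(i < n) \sum_(j < n) ((j == c) && (i == d))%:R *
   ((i == a) && (j == b))%:R :> R); last by rewrite sum2_mul_eq andbC.
apply: eq_bigr => i _; rewrite summxE; apply: eq_bigr => j _.
rewrite !mxE !cidx_eq (eq_sym i a) (eq_sym j b) (eq_sym j c) (eq_sym i d).
by case: (a == i); case: (b == j); case: (c == j); case: (d == i);
  rewrite /= ?mulr1 ?mulr0.
Qed.

Lemma mulmx_commmx_vec (X : 'M[R]_n) : commmx R n *m vec X = vec X^T.
Proof.
apply: colP_cidx => a b; rewrite mulmx_cidx vecE mxE exchange_big /=.
rewrite -[RHS](sum2_mul_eq (fun j q => X j q) b a).
apply: eq_bigr => j _; apply: eq_bigr => q _.
by rewrite commmxE vecE mulrC (eq_sym a) (eq_sym b) andbC.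
Qed.

Lemma unvec_mulmx_col (Z : 'M[R]_(n * n)) (X : 'M[R]_n) k :
  unvec (Z *m vec X) *m delta_mx k 0 = \sum_q blk Z k q *m col q X.
Proof.
apply/colP => i; rewrite mxE summxE (bigD1 k) //= big1 => [|j Hj]; last first.
  by rewrite !mxE (negbTE Hj) mulr0.
rewrite [delta_mx _ _ _ _]mxE !eqxx mulr1 addr0 mxE mulmx_cidx.
apply: eq_bigr => q _; rewrite mxE; apply: eq_bigr => j _.
by rewrite !mxE vecE.
Qed.

End VecKron.

Section InnerProduct.
Variables (R : realType) (n : nat).
Implicit Types x y z : 'cV[R]_n.

Lemma ipDl x y z : ip (x + y) z = ip x z + ip y z.
Proof. by rewrite /ip linearD /= mulmxDl mxE. Qed.

Lemma ipDr x y z : ip x (y + z) = ip x y + ip x z.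
Proof. by rewrite /ip mulmxDr mxE. Qed.

Lemma ipZl a x y : ip (a *: x) y = a * ip x y.
Proof. by rewrite /ip linearZ /= -scalemxAl mxE. Qed.

Lemma ipZr a x y : ip x (a *: y) = a * ip x y.
Proof. by rewrite /ip -scalemxAr mxE. Qed.

Lemma ipNl x y : ip (- x) y = - ip x y.
Proof. by rewrite -scaleN1r ipZl mulN1r. Qed.

Lemma ip0r x : ip x 0 = 0.
Proof. by rewrite /ip mulmx0 mxE. Qed.

Lemma ipC x y : ip x y = ip y x.
Proof. by rewrite /ip -[in LHS](trmxK (x^T *m y)) [in LHS]mxE trmx_mul trmxK. Qed.

Lemma ip_mulmxr x (A : 'M[R]_n) y : ip x (A *m y) = ip (A^T *m x) y.
Proof. by rewrite /ip trmx_mul trmxK mulmxA. Qed.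

Lemma ip_self_ge0 x : 0 <= ip x x.
Proof. by rewrite /ip mxE sumr_ge0 // => i _; rewrite mxE -expr2 sqr_ge0. Qed.

Lemma ip_self_eq0 x : (ip x x == 0) = (x == 0).
Proof.
apply/idP/eqP => [|->]; last by rewrite ip0r.
rewrite /ip mxE psumr_eq0 => [/allP x0|i _]; last by rewrite mxE -expr2 sqr_ge0.
apply/colP => i; have /x0 : i \in index_enum 'I_n by rewrite mem_index_enum.
by rewrite mxE -expr2 sqrf_eq0 mxE => /eqP ->.
Qed.

Lemma nonpos_quadratic_maxP (q : 'cV[R]_n -> R) (r : 'cV[R]_n) :
  (forall c h, q (c *: h) = c ^+ 2 * q h) -> (forall h, q h <= 0) ->
  (forall h, q h - ip h r <= 0) <-> r = 0.
Proof.
move=> qZ q_le0; split => [q_max|-> h]; last by rewrite ip0r subr0.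
apply/eqP; rewrite -ip_self_eq0 eq_le ip_self_ge0 andbT; apply: contraT.
rewrite -ltNge => s_gt0; set s := ip r r in s_gt0.
have a_ge0 : 0 <= - q r by rewrite oppr_ge0.
(* along [- t r] the linear term [t s] beats the quadratic one for small [t > 0] *)
pose t := s / (1 - q r).
have t_gt0 : 0 < t by rewrite divr_gt0 // ltr_pwDl.
have ts : t * (1 - q r) = s by rewrite mulfVK // gt_eqF // ltr_pwDl.
have := q_max (- t *: r); rewrite qZ ipZl -/s sqrrN.
have : 0 < t * t by rewrite mulr_gt0.
nra.
Qed.

End InnerProduct.

Section StablePoint.
Variables (R : realType) (n : nat) (Sigma : 'M[R]_n) (gam : 'I_n -> R).
Hypothesis Sigma_sym : Sigma^T = Sigma.

Local Notation G := (Gam gam).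
Local Notation K := (Kmx Sigma gam).
Local Notation L := (Lmx Sigma gam).
Local Notation W := (stableW Sigma gam).

Lemma Gam_tr : G^T = G.
Proof. by rewrite /Gam tr_diag_mx. Qed.

Lemma mulmx_Kmx_vec X : K *m vec X = vec (Sigma *m X *m G + G *m X *m Sigma).
Proof. by rewrite /Kmx mulmxDl !mulmx_kron_vec Gam_tr Sigma_sym vecD. Qed.

Lemma stableW_Lmx M : W M = unvec (L *m vec M).
Proof.
by rewrite /stableW /Lmx -scalemxAl mulmxDl -mulmxA mulmx_commmx_vec -mulmxDr vecD.
Qed.

Lemma stableWD M N : W (M + N) = W M + W N.
Proof. by rewrite !stableW_Lmx vecD mulmxDr unvecD. Qed.

Lemma stableWZ a M : W (a *: M) = a *: W M.
Proof. by rewrite !stableW_Lmx vecZ -scalemxAr unvecZ. Qed.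

Lemma stableW_col M k : W M *m delta_mx k 0 = \sum_q blk L k q *m col q M.
Proof. by rewrite stableW_Lmx unvec_mulmx_col. Qed.

Lemma stableW_rank1 k (h : 'cV[R]_n) :
  W (h *m (delta_mx k 0)^T) *m delta_mx k 0 = blk L k k *m h.
Proof.
rewrite stableW_col (bigD1 k) //= big1 ?addr0 => [|j jk].
  by congr (_ *m _); apply/colP => i; rewrite !mxE big_ord1 !mxE eqxx mulr1.
apply/colP => i; rewrite !mxE big1 // => l _.
by rewrite !mxE big_ord1 !mxE (negbTE jk) /= !mulr0.
Qed.

Hypothesis Sigma_pd : forall x : 'cV[R]_n, x != 0 -> 0 < (x^T *m Sigma *m x) 0 0.
Hypothesis gam_gt0 : forall i, 0 < gam i.

Lemma Sigma_psd (x : 'cV[R]_n) : 0 <= (x^T *m Sigma *m x) 0 0.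
Proof. by have [->|/Sigma_pd/ltW//] := eqVneq x 0; rewrite mulmx0 mxE. Qed.

Definition gam_energy (Y : 'M[R]_n) := \tr (G *m (Y^T *m Sigma *m Y)).

Lemma gam_energyE Y :
  gam_energy Y = \sum_i gam i * ((col i Y)^T *m Sigma *m col i Y) 0 0.
Proof.
apply: eq_bigr => i _; rewrite /Gam mul_diag_mx mxE [(\row__ _) _ _]mxE.
by rewrite colE trmx_mul trmx_delta !mulmxA -colE -!mulmxA -rowE !mxE.
Qed.

Lemma gam_energy_term_ge0 Y i :
  0 <= gam i * ((col i Y)^T *m Sigma *m col i Y) 0 0.
Proof. by rewrite mulr_ge0 ?Sigma_psd // ltW. Qed.

Lemma gam_energy_ge0 Y : 0 <= gam_energy Y.
Proof. by rewrite gam_energyE sumr_ge0 // => i _; exact: gam_energy_term_ge0. Qed.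

Lemma gam_energy_ge_col Y k :
  gam k * ((col k Y)^T *m Sigma *m col k Y) 0 0 <= gam_energy Y.
Proof.
rewrite gam_energyE (bigD1 k) //= lerDl sumr_ge0 // => i _.
exact: gam_energy_term_ge0.
Qed.

Lemma gam_energy_eq0 Y : gam_energy Y = 0 -> Y = 0.
Proof.
rewrite gam_energyE => /eqP; rewrite psumr_eq0 => [/allP Y0|i _]; last first.
  exact: gam_energy_term_ge0.
apply/matrixP => j i; rewrite mxE.
have /Y0 : i \in index_enum 'I_n by rewrite mem_index_enum.
rewrite /= mulf_eq0 gt_eqF //= => /eqP q0.
have /eqP/colP/(_ j) : col i Y == 0.
  by apply: contraT => /Sigma_pd; rewrite q0 ltxx.
by rewrite !mxE.
Qed.

Lemma vec_dot (X Y : 'M[R]_n) : ((vec X)^T *m vec Y) 0 0 = \tr (X^T *m Y).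
Proof.
rewrite mxE sum_cidx /mxtrace; apply: eq_bigr => j _; rewrite mxE.
by apply: eq_bigr => i _; rewrite !mxE !vecE.
Qed.

(* [<vec X, K vec X> = gam_energy X + gam_energy X^T] is positive definite. *)
Lemma Kmx_unit : K \in unitmx.
Proof.
rewrite unitmxE unitfE; apply/negP => /det0P [v v_neq0 vK0].
set X := unvec v^T; have vX : vec X = v^T by rewrite unvecK.
have : ((vec X)^T *m (K *m vec X)) 0 0 = 0.
  by rewrite vX trmxK mulmxA vK0 mul0mx mxE.
rewrite mulmx_Kmx_vec vec_dot mulmxDr mxtraceD.
have -> : \tr (X^T *m (Sigma *m X *m G)) = gam_energy X.
  by rewrite /gam_energy !mulmxA mxtrace_mulC !mulmxA.
have -> : \tr (X^T *m (G *m X *m Sigma)) = gam_energy X^T.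
  by rewrite /gam_energy trmxK mxtrace_mulC !mulmxA.
move=> /eqP; rewrite paddr_eq0 ?gam_energy_ge0 // => /andP [/eqP/gam_energy_eq0 X0 _].
by move: v_neq0; rewrite -[v]trmxK -vX X0 vec0 trmx0 eqxx.
Qed.

Lemma stableW_eq M :
  Sigma *m W M *m G + G *m W M *m Sigma = 2^-1 *: (M + M^T).
Proof.
apply: vec_inj; rewrite -mulmx_Kmx_vec /stableW unvecK -scalemxAr.
by rewrite mulKVmx ?Kmx_unit // vecZ.
Qed.

Lemma stableW_sym M : (W M)^T = W M.
Proof.
apply: vec_inj; rewrite -(mulKmx Kmx_unit (vec (W M)^T)) -(mulKmx Kmx_unit (vec (W M))).
congr (_ *m _); rewrite !mulmx_Kmx_vec; congr vec.
have -> : Sigma *m (W M)^T *m G + G *m (W M)^T *m Sigma =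
   (Sigma *m W M *m G + G *m W M *m Sigma)^T.
  by rewrite linearD /= !trmx_mul Sigma_sym Gam_tr !mulmxA addrC.
by rewrite stableW_eq linearZ /= linearD /= trmxK addrC.
Qed.

Section Agent.
Variable k : 'I_n.
Local Notation e := (delta_mx k (0 : 'I_1) : 'cV[R]_n).
Local Notation B := (blk L k k).

Definition own_quad (h : 'cV[R]_n) :=
  - ip h (B *m h) + gam k * ip (B *m h) (Sigma *m (B *m h)).

Lemma own_quadZ c h : own_quad (c *: h) = c ^+ 2 * own_quad h.
Proof. by rewrite /own_quad -!scalemxAr !ipZl !ipZr; ring. Qed.

Lemma own_quad_le0 h : own_quad h <= 0.
Proof.
set D := h *m e^T; set X := W D.
have XS : X^T = X by exact: stableW_sym.
have Bh : B *m h = X *m e by rewrite stableW_rank1.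
have tr_sym : \tr (D^T *m X) = \tr ((2^-1 *: (D + D^T)) *m X).
  have DX : \tr (D^T *m X) = \tr (D *m X).
    by rewrite -mxtrace_tr trmx_mul trmxK XS mxtrace_mulC.
  rewrite -scalemxAl mxtraceZ mulmxDl mxtraceD -DX; lra.
have hBh : ip h (B *m h) = 2 * gam_energy X.
  transitivity (\tr (D^T *m X)).
    by rewrite /ip Bh /D trmx_mul trmxK -mulmxA mxtrace_mulC /mxtrace big_ord1 mulmxA.
  rewrite tr_sym -stableW_eq -/X mulmxDl mxtraceD /gam_energy XS.
  have -> : \tr (Sigma *m X *m G *m X) = \tr (G *m (X *m Sigma *m X)).
    by rewrite -mulmxA mxtrace_mulC !mulmxA.
  by rewrite !mulmxA; ring.
have := gam_energy_ge_col X k.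
rewrite colE -Bh -mulmxA -/(ip (B *m h) (Sigma *m (B *m h))).
have := gam_energy_ge0 X; rewrite /own_quad hBh; lra.
Qed.

Variable delta : 'I_n -> 'cV[R]_n.
Local Notation Pm := ((2 * gam k) *: (B^T *m Sigma)).

Definition util_grad M :=
  B^T *m delta k + (1%:M - Pm) *m (W (M + colsmx delta) *m e).

Lemma colsmx_replace_col h :
  colsmx (replace_col delta k (delta k + h)) = colsmx delta + h *m e^T.
Proof.
apply/matrixP => i j; rewrite !mxE big_ord1 !mxE /replace_col.
by case: (eqVneq j k) => [->|jk]; rewrite ?eqxx ?mxE /= ?mulr1 ?mulr0 ?addr0.
Qed.

Lemma utility_replace_col h M :
  utility Sigma gam k (replace_col delta k (delta k + h)) M =
  utility Sigma gam k delta M + own_quad h - ip h (util_grad M).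
Proof.
rewrite /utility /evec colsmx_replace_col addrA (stableWD (M + colsmx delta)).
rewrite (mulmxDl (W (M + colsmx delta))) (stableW_rank1 k h) /replace_col eqxx.
rewrite /own_quad /util_grad.
set w := W (M + colsmx delta) *m e.
have gradB : ip h (B^T *m delta k) = ip (delta k) (B *m h).
  by rewrite ip_mulmxr trmxK ipC.
have gradW : ip h ((1%:M - Pm) *m w) = ip h w - 2 * gam k * ip (B *m h) (Sigma *m w).
  rewrite mulmxBl mul1mx ipDr -mulNmx -scaleNr -!scalemxAl ipZr -mulmxA.
  by rewrite (ip_mulmxr h B^T) trmxK; ring.
have Sigma_wv : ip w (Sigma *m (B *m h)) = ip (B *m h) (Sigma *m w).
  by rewrite ip_mulmxr Sigma_sym ipC.
rewrite (ipDl (delta k)) (ipDl w) (mulmxDr Sigma w) !ipDr gradB gradW Sigma_wv; ring.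
Qed.

Lemma util_grad_affine M : util_grad M = (1%:M - Pm) *m (W M *m e) + util_grad 0.
Proof. by rewrite /util_grad add0r stableWD (mulmxDl (W M)) mulmxDr addrCA. Qed.

Variable S : {set 'I_n}.
Hypothesis delta_supp : forall j, j \notin S -> delta j = 0.

Lemma util_gradE M :
  util_grad M = Tmx Sigma gam k k *m delta k +
    \sum_(j in S | j != k) Tmx Sigma gam k j *m delta j - (Pm - 1%:M) *m (W M *m e).
Proof.
have Wdelta : W (colsmx delta) *m e =
    B *m delta k + \sum_(j in S | j != k) blk L k j *m delta j.
  have colsmxE j : col j (colsmx delta) = delta j by apply/colP => i; rewrite !mxE.
  rewrite stableW_col (bigD1 k) //= [X in _ = _ + X]big_mkcondl /= colsmxE.
  congr (_ + _); apply: eq_bigr => j _; rewrite colsmxE.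
  by case: ifP => // /negbT/delta_supp ->; rewrite mulmx0.
set s := \sum_(j in S | j != k) blk L k j *m delta j in Wdelta *.
have sumT : \sum_(j in S | j != k) Tmx Sigma gam k j *m delta j = (1%:M - Pm) *m s.
  rewrite mulmx_sumr; apply: eq_bigr => j /andP [_ jk].
  by rewrite /Tmx (negbTE jk) mulmxA.
have TB : (2 * gam k) *: (B^T *m Sigma *m B) *m delta k = Pm *m (B *m delta k).
  by rewrite -!scalemxAl !mulmxA.
rewrite /util_grad (stableWD M) (mulmxDl (W M)) Wdelta sumT /Tmx eqxx.
rewrite !mulmxDr !mulmxDl !mulNmx !mul1mx TB.
move: (Pm *m (B *m delta k)) (Pm *m (W M *m e)) (Pm *m s) => pa pv ps.
clear Wdelta sumT; move: (B *m delta k) (B^T *m delta k) (W M *m e) s => a b v {}s.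
by apply/matrixP => i j; rewrite !mxE; ring.
Qed.

End Agent.
End StablePoint.

Section LinearForm.
Variables (R : realType) (n : nat).

Definition mx_linear_form (f : 'M[R]_n -> R) :=
  forall a M N, f (a *: M + N) = a * f M + f N.

Variable f : 'M[R]_n -> R.
Hypothesis f_lin : mx_linear_form f.

Lemma mx_linear_form0 : f 0 = 0.
Proof. by have := f_lin 1 0 0; rewrite addr0 scaler0 mul1r; lra. Qed.

Lemma mx_linear_formD M N : f (M + N) = f M + f N.
Proof. by rewrite -(scale1r M) f_lin mul1r scale1r. Qed.

Lemma mx_linear_formZ a M : f (a *: M) = a * f M.
Proof. by rewrite -(addr0 (a *: M)) f_lin mx_linear_form0 addr0. Qed.

Lemma mx_linear_form_entries M :
  f M = \sum_(i < n) \sum_(j < n) f (delta_mx i j) * M i j.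
Proof.
rewrite {1}(matrix_sum_delta M).
rewrite (big_morph f mx_linear_formD mx_linear_form0); apply: eq_bigr => i _.
rewrite (big_morph f mx_linear_formD mx_linear_form0); apply: eq_bigr => j _.
by rewrite mx_linear_formZ mulrC.
Qed.

End LinearForm.

Section Expectation.
Variables (R : realType) (n : nat) (d : measure_display) (Omega : measurableType d).
Variables (P : probability Omega R) (Mr : Omega -> 'M[R]_n).
Hypothesis Mr_meas : forall i j, measurable_fun setT (fun w => Mr w i j).
Hypothesis Mr_int : forall i j, P.-integrable setT (fun w => (Mr w i j)%:E).
Hypothesis Mr_sqr_int : forall i j, P.-integrable setT (fun w => ((Mr w i j) ^+ 2)%:E).

Definition integrable_of (F : 'M[R]_n -> R) :=
  P.-integrable setT (EFin \o (fun w => F (Mr w))).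

Definition mean_of (F : 'M[R]_n -> R) := Rintegral P setT (fun w => F (Mr w)).

Definition mean_mx : 'M[R]_n := \matrix_(i, j) Rintegral P setT (fun w => Mr w i j).

Lemma integrable_ofD F1 F2 :
  integrable_of F1 -> integrable_of F2 -> integrable_of (fun M => F1 M + F2 M).
Proof. by move=> F1i F2i; apply: eq_integrable (integrableD _ F1i F2i) => // x. Qed.

Lemma integrable_ofZ a F : integrable_of F -> integrable_of (fun M => a * F M).
Proof. by move=> Fi; apply: eq_integrable (integrableZl _ a Fi) => // x. Qed.

Lemma integrable_of_cst c : integrable_of (fun _ => c).
Proof.
apply/integrableP; split; first exact: measurable_cst.
by rewrite integral_cst //= probability_setT mule1 ltry.
Qed.

Lemma integrable_of_sum (I : Type) (s : seq I) (F : I -> 'M[R]_n -> R) :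
  (forall i, integrable_of (F i)) -> integrable_of (fun M => \sum_(i <- s) F i M).
Proof.
move=> Fi; have := @integrable_sum _ _ _ P setT measurableT I s predT
  (fun i => EFin \o (fun w => F i (Mr w))) (fun i _ => Fi i).
by apply: eq_integrable => // x _ /=; rewrite sumEFin.
Qed.

(* [|a b| <= a^2 + b^2] reduces products of entries to the second moments. *)
Lemma integrable_of_entry_mul i j k l : integrable_of (fun M => M i j * M k l).
Proof.
have sqr_int := @integrable_ofD (fun M => M i j ^+ 2) (fun M => M k l ^+ 2)
  (Mr_sqr_int i j) (Mr_sqr_int k l).
apply: (le_integrable measurableT _ _ sqr_int).
  exact/measurable_realfun.measurable_EFinP/measurable_realfun.measurable_funM.
move=> x _ /=; set a := Mr x i j; set b := Mr x k l.
rewrite lee_fin normrM (@ger0_norm _ (a ^+ 2 + b ^+ 2)) ?addr_ge0 ?sqr_ge0 //.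
rewrite -(real_normK (num_real a)) -(real_normK (num_real b)).
have := normr_ge0 a; have := normr_ge0 b; have := sqr_ge0 (`|a| - `|b|).
rewrite !expr2; nra.
Qed.

Lemma integrable_of_linear f : mx_linear_form f -> integrable_of f.
Proof.
move=> f_lin; apply: eq_integrable (_ : integrable_of (fun M =>
  \sum_(i < n) \sum_(j < n) f (delta_mx i j) * M i j)) => [//|x _|].
  by rewrite /= -mx_linear_form_entries.
by apply: integrable_of_sum => i; apply: integrable_of_sum => j; exact/integrable_ofZ/Mr_int.
Qed.

Lemma integrable_of_linear_mul f g : mx_linear_form f -> mx_linear_form g ->
  integrable_of (fun M => f M * g M).
Proof.
move=> f_lin g_lin; apply: eq_integrable (_ : integrable_of (fun M =>
  \sum_(i < n) \sum_(j < n) \sum_(k < n) \sum_(l < n)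
    (f (delta_mx i j) * g (delta_mx k l)) * (M i j * M k l))) => [//|x _|].
  rewrite /= [f _]mx_linear_form_entries // [g _]mx_linear_form_entries //.
  rewrite mulr_suml; congr EFin; apply: eq_bigr => i _.
  rewrite mulr_suml; apply: eq_bigr => j _; rewrite mulr_sumr; apply: eq_bigr => k _.
  by rewrite mulr_sumr; apply: eq_bigr => l _; rewrite mulrACA.
do 4![apply: integrable_of_sum => ?]; exact/integrable_ofZ/integrable_of_entry_mul.
Qed.

Lemma integrable_of_affine_mul f g c e : mx_linear_form f -> mx_linear_form g ->
  integrable_of (fun M => (f M + c) * (g M + e)).
Proof.
move=> f_lin g_lin; apply: eq_integrable (_ : integrable_of (fun M =>
  f M * g M + (e * f M + (c * g M + c * e)))) => [//|x _|]; first by congr EFin; ring.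
apply: integrable_ofD; first exact: integrable_of_linear_mul.
apply: integrable_ofD; first exact/integrable_ofZ/integrable_of_linear.
apply: integrable_ofD; first exact/integrable_ofZ/integrable_of_linear.
exact: integrable_of_cst.
Qed.

Lemma mean_ofD F1 F2 : integrable_of F1 -> integrable_of F2 ->
  mean_of (fun M => F1 M + F2 M) = mean_of F1 + mean_of F2.
Proof. by move=> F1i F2i; rewrite /mean_of RintegralD. Qed.

Lemma mean_ofZ a F : integrable_of F -> mean_of (fun M => a * F M) = a * mean_of F.
Proof. by move=> Fi; rewrite /mean_of RintegralZl. Qed.

Lemma mean_of_cst c : mean_of (fun _ => c) = c.
Proof.
have P1 : P setT = 1%E := probability_setT P.
rewrite /mean_of Rintegral_cst // [fine _](_ : _ = 1) ?mulr1 //.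
exact: (congr1 fine P1).
Qed.

Lemma mean_of_sum (I : Type) (s : seq I) (F : I -> 'M[R]_n -> R) :
  (forall i, integrable_of (F i)) ->
  mean_of (fun M => \sum_(i <- s) F i M) = \sum_(i <- s) mean_of (F i).
Proof.
move=> Fi; elim: s => [|i s IHs].
  by rewrite big_nil -[RHS](mean_of_cst 0); apply: eq_Rintegral => x _; rewrite big_nil.
rewrite big_cons -IHs -mean_ofD //; last exact: integrable_of_sum.
by apply: eq_Rintegral => x _; rewrite big_cons.
Qed.

Lemma mean_of_affine f c : mx_linear_form f -> mean_of (fun M => f M + c) = f mean_mx + c.
Proof.
move=> f_lin; rewrite mean_ofD ?mean_of_cst //; last first.
- exact: integrable_of_cst.
- exact: integrable_of_linear.
congr (_ + _); rewrite [in RHS]mx_linear_form_entries //.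
transitivity (mean_of (fun M => \sum_(i < n) \sum_(j < n) f (delta_mx i j) * M i j)).
  by apply: eq_Rintegral => x _; rewrite -mx_linear_form_entries.
rewrite mean_of_sum => [|i]; last by apply: integrable_of_sum => j; exact/integrable_ofZ/Mr_int.
apply: eq_bigr => i _; rewrite mean_of_sum => [|j]; last exact/integrable_ofZ/Mr_int.
by apply: eq_bigr => j _; rewrite mean_ofZ ?mxE //; exact: Mr_int.
Qed.

End Expectation.

Section BestResponse.
Variables (R : realType) (n : nat) (Sigma : 'M[R]_n) (gam : 'I_n -> R).
Hypothesis Sigma_sym : Sigma^T = Sigma.
Hypothesis Sigma_pd : forall x : 'cV[R]_n, x != 0 -> 0 < (x^T *m Sigma *m x) 0 0.
Hypothesis gam_gt0 : forall i, 0 < gam i.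
Variables (d : measure_display) (Omega : measurableType d).
Variables (Pk : 'I_n -> probability Omega R) (Mr : Omega -> 'M[R]_n).
Hypothesis Mr_meas : forall i j, measurable_fun setT (fun w => Mr w i j).
Hypothesis Mr_int : forall k i j, (Pk k).-integrable setT (fun w => (Mr w i j)%:E).
Hypothesis Mr_sqr_int :
  forall k i j, (Pk k).-integrable setT (fun w => ((Mr w i j) ^+ 2)%:E).

Local Notation W := (stableW Sigma gam).
Local Notation e k := (delta_mx k (0 : 'I_1) : 'cV[R]_n).

Lemma stableW_col_ip_linear k u (A : 'M[R]_n) :
  mx_linear_form (fun M => ip u (A *m (W M *m e k))).
Proof.
move=> a M N; rewrite stableWD stableWZ (mulmxDl (a *: W M)) -scalemxAl.
by rewrite mulmxDr -scalemxAr ipDr ipZr.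
Qed.

Lemma stableW_col_entry_linear k (A : 'M[R]_n) i :
  mx_linear_form (fun M => (A *m (W M *m e k)) i 0).
Proof.
move=> a M N; rewrite stableWD stableWZ (mulmxDl (a *: W M)) -scalemxAl.
by rewrite mulmxDr -scalemxAr !mxE.
Qed.

Lemma integrable_utility k delta : integrable_of (Pk k) Mr (utility Sigma gam k delta).
Proof.
set c := W (colsmx delta) *m e k.
pose w (A : 'M[R]_n) M := A *m (W M *m e k).
apply: eq_integrable (_ : integrable_of (Pk k) Mr (fun M =>
  -1 * (ip (delta k) (w 1%:M M) + ip (delta k) c) +
  gam k * \sum_a ((w 1%:M M a 0 + c a 0) * (w Sigma M a 0 + (Sigma *m c) a 0))))
  => [//|x _|].
  rewrite /= /utility /evec stableWD (mulmxDl (W (Mr x))) /w mul1mx ipDr mulN1r.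
  congr (EFin (_ + _ * _)); rewrite /ip mxE; apply: eq_bigr => a _.
  by rewrite mulmxDr !mxE.
apply: integrable_ofD.
  apply/integrable_ofZ/integrable_ofD; last exact: integrable_of_cst.
  exact/integrable_of_linear/stableW_col_ip_linear.
apply/integrable_ofZ/integrable_of_sum => a.
by apply: integrable_of_affine_mul => //; exact: stableW_col_entry_linear.
Qed.

Lemma exp_utility_replace_col k delta h :
  exp_utility Sigma gam Pk Mr k (replace_col delta k (delta k + h)) =
  exp_utility Sigma gam Pk Mr k delta + own_quad Sigma gam k h
  - ip h (util_grad Sigma gam k delta (Defs.EM Pk Mr k)).
Proof.
set g0 := util_grad Sigma gam k delta 0.
set c := own_quad Sigma gam k h - ip h g0.
pose phi M := ip (- h)
  ((1%:M - (2 * gam k) *: ((blk (Lmx Sigma gam) k k)^T *m Sigma)) *m (W M *m e k)).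
have phi_grad M : phi M + c =
    own_quad Sigma gam k h - ip h (util_grad Sigma gam k delta M).
  by rewrite /phi /c (util_grad_affine _ _ _ _ M) -/g0 [in RHS]ipDr ipNl; ring.
transitivity (mean_of (Pk k) Mr (fun M => utility Sigma gam k delta M + (phi M + c))).
  apply: eq_Rintegral => x _; rewrite phi_grad.
  by rewrite utility_replace_col //; ring.
have phi_lin : mx_linear_form phi by exact: stableW_col_ip_linear.
rewrite mean_ofD ?mean_of_affine ?phi_grad ?addrA //.
  exact: (integrable_utility k delta).
apply: integrable_ofD; [exact: integrable_of_linear (Mr_int k) _ phi_lin | exact: integrable_of_cst].
Qed.

Lemma best_responseP (S : {set 'I_n}) k delta :
  (forall j, j \notin S -> delta j = 0) ->
  best_response Sigma gam Pk Mr k delta <-> br_eq Sigma gam Pk Mr S k delta.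
Proof.
move=> delta_supp.
set g := util_grad Sigma gam k delta (Defs.EM Pk Mr k).
have br_eq_grad : br_eq Sigma gam Pk Mr S k delta <-> g = 0.
  rewrite /g (util_gradE _ _ _ delta_supp) /br_eq /vk /evec.
  by split => [->|/eqP]; [rewrite subrr | rewrite subr_eq0 => /eqP].
rewrite br_eq_grad -(nonpos_quadratic_maxP _ (own_quadZ Sigma gam k)); last first.
  exact: own_quad_le0.
split => [br h|nonpos dk].
  by have := br (delta k + h); rewrite exp_utility_replace_col; lra.
have -> : dk = delta k + (dk - delta k) by rewrite addrC subrK.
by have := nonpos (dk - delta k); rewrite exp_utility_replace_col; lra.
Qed.

End BestResponse.

Unset Implicit Arguments. Set Strict Implicit. Set Printing Implicit Defensive.

Theorem mainTheorem9 (R : realType) (n : nat)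
  (Sigma : 'M[R]_n) (gam : 'I_n -> R)
  (HSsym : Sigma^T = Sigma)
  (HSpd : forall x : 'cV[R]_n, x != 0 -> 0 < (x^T *m Sigma *m x) 0 0)
  (Hgam : forall i, 0 < gam i)
  (d : measure_display) (Omega : measurableType d)
  (Pk : 'I_n -> probability Omega R) (Mr : Omega -> 'M[R]_n)
  (Hmeas : forall i j, measurable_fun setT (fun w => Mr w i j))
  (Hmom1 : forall k i j, (Pk k).-integrable setT (fun w => (Mr w i j)%:E))
  (Hmom2 : forall k i j, (Pk k).-integrable setT (fun w => ((Mr w i j) ^+ 2)%:E))
  (S : {set 'I_n}) :
  (forall (k : 'I_n) (delta : 'I_n -> 'cV[R]_n),
     k \in S -> (forall j, j \notin S -> delta j = 0) ->
     (best_response Sigma gam Pk Mr k delta <-> br_eq Sigma gam Pk Mr S k delta))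
  /\
  (forall delta : 'I_n -> 'cV[R]_n, (forall j, j \notin S -> delta j = 0) ->
     (nash Sigma gam Pk Mr S delta <->
      (forall k, k \in S -> br_eq Sigma gam Pk Mr S k delta)))
  /\
  ((~ exists delta : 'I_n -> 'cV[R]_n, (forall j, j \notin S -> delta j = 0) /\
        (forall k, k \in S -> br_eq Sigma gam Pk Mr S k delta)) ->
   ~ exists delta : 'I_n -> 'cV[R]_n, (forall j, j \notin S -> delta j = 0) /\
        nash Sigma gam Pk Mr S delta).
Proof.
have BR := best_responseP HSsym HSpd Hgam Hmeas Hmom1 Hmom2 (S := S).
split; [|split].
- by move=> k delta _ supp; exact: BR.
- by move=> delta supp; split => br k kS; apply/(BR k delta supp)/br.
- move=> no_sol [delta [supp nash_delta]]; apply: no_sol; exists delta.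
  by split => // k kS; apply/(BR k delta supp)/nash_delta.
Qed.
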